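(* Let $s\ge0$ be an integer and let $G$ be a graph such that $G$ is not an $s$-star, but $G\setminus v$ is an $s$-star for every $v\in V(G)$. Then $|V(G)|\le 4s+5$.
   Context: Graphs are finite and simple. A set $X\subseteq V(G)$ is a crown of $G$ if every vertex $v\in V(G)$ is either adjacent to all vertices of $X\setminus\{v\}$ or adjacent to none of them (in particular $G[X]$ is complete or edgeless). A set $S\subseteq V(G)$ is a core of $G$ if $V(G)\setminus S$ is a crown. $G$ is an $s$-star if it has a core of size at most $s$. *)

From mathcomp Require Import all_boot.
Set Implicit Arguments. Unset Strict Implicit. Unset Printing Implicit Defensive.

(* A finite simple graph on vertex type T: symmetric irreflexive relation e.
   Subgraphs induced on a vertex set U : {set T} are handled by restricting
   all quantifications to U. *)
Definition simple_graph (T : finType) (e : rel T) : Prop :=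
  symmetric e /\ irreflexive e.

Definition is_crown (T : finType) (e : rel T) (U X : {set T}) : bool :=
  (X \subset U) &&
  [forall v in U, [forall x in X :\ v, e v x] || [forall x in X :\ v, ~~ e v x]].

Definition is_core (T : finType) (e : rel T) (U S : {set T}) : bool :=
  (S \subset U) && is_crown e U (U :\: S).

Definition is_star (T : finType) (e : rel T) (U : {set T}) (s : nat) : bool :=
  [exists S : {set T}, is_core e U S && (#|S| <= s)].

(* For each vertex v pick a crown X v of G - v missing at most s + 1 vertices.
   For v <> w, X v :&: X w is a crown of G, and two crowns of G sharing two
   vertices have a crown as union.  Let M be a maximum crown of G: it misses at
   most 2s + 2 vertices and, G not being an s-star, more than s.  If
   |G| >= 4s + 6, every X v :&: X w meets M in two vertices, so it lies in M;
   then the sets X x :\: M, x in M, are nonempty and pairwise disjoint inside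
   ~: M, whence |M| <= |~: M| <= 2s + 2 and |G| <= 4s + 4. *)

From mathcomp Require Import all_boot zify.

Set Implicit Arguments.
Unset Strict Implicit.
Unset Printing Implicit Defensive.

Section Crowns.
Variables (T : finType) (e : rel T).
Implicit Types (U X Y Z : {set T}) (v : T).

Definition uniform_at v X : bool :=
  [forall x in X :\ v, e v x] || [forall x in X :\ v, ~~ e v x].

Lemma uniform_atS v Y Z : Y \subset Z -> uniform_at v Z -> uniform_at v Y.
Proof.
move=> sYZ /orP[] /forall_inP adj; apply/orP; [left | right];
  by apply/forall_inP => x /(subsetP (setSD _ sYZ)) /adj.
Qed.

Lemma uniform_atE v X z : z \in X :\ v ->
  uniform_at v X = [forall x in X :\ v, e v x == e v z].
Proof.
move=> zX; apply/idP/forall_inP => [/orP[]/forall_inP adj x xX | same].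
- by rewrite !adj.
- by rewrite (negbTE (adj x xX)) (negbTE (adj z zX)).
case: (boolP (e v z)) => evz; apply/orP; [left | right];
  by apply/forall_inP => x /same/eqP ->.
Qed.

Lemma uniform_atU v X Y z : z \in (X :&: Y) :\ v ->
  uniform_at v X -> uniform_at v Y -> uniform_at v (X :|: Y).
Proof.
rewrite !inE => /and3P[zv zX zY].
have zXv : z \in X :\ v by rewrite !inE zv zX.
have zYv : z \in Y :\ v by rewrite !inE zv zY.
have zXYv : z \in (X :|: Y) :\ v by rewrite !inE zv zX.
rewrite (uniform_atE zXv) (uniform_atE zYv) (uniform_atE zXYv).
move=> /forall_inP eqX /forall_inP eqY; apply/forall_inP => x.
rewrite !inE => /andP[xv /orP[xX | xY]].
- by apply: eqX; rewrite !inE xv xX.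
- by apply: eqY; rewrite !inE xv xY.
Qed.

Lemma crown_uniform U X : is_crown e U X -> {in U, forall v, uniform_at v X}.
Proof. by case/andP=> _ /forall_inP. Qed.

Lemma is_crownT X : is_crown e setT X = [forall v, uniform_at v X].
Proof.
by rewrite /is_crown subsetT; apply: eq_forallb => v; rewrite in_setT.
Qed.

Lemma starP U s :
  reflect (exists2 X, is_crown e U X & #|U :\: X| <= s) (is_star e U s).
Proof.
apply: (iffP existsP) => [[S /andP[/andP[sSU crS] leS]] | [X crX leX]].
  by exists (U :\: S); rewrite // setDDr setDv set0U (setIidPr sSU).
exists (U :\: X); rewrite leX andbT /is_core subsetDl /=.
by have /andP[sXU _] := crX; rewrite setDDr setDv set0U (setIidPr sXU).
Qed.

Lemma card_setD_crown_gt U X s :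
  is_crown e U X -> ~~ is_star e U s -> s < #|U :\: X|.
Proof.
by move=> crX; rewrite ltnNge; apply: contra => leX; apply/starP; exists X.
Qed.

Lemma crown_setI w x X Y : w != x ->
    is_crown e (setT :\ w) X -> is_crown e (setT :\ x) Y ->
  is_crown e setT (X :&: Y).
Proof.
move=> wx crX crY; rewrite is_crownT; apply/forallP => v.
have [-> | vw] := eqVneq v w.
  apply: (uniform_atS (subsetIr X Y)).
  by apply: (crown_uniform crY); rewrite !inE wx.
apply: (uniform_atS (subsetIl X Y)).
by apply: (crown_uniform crX); rewrite !inE vw.
Qed.

Lemma crown_setU X Y : is_crown e setT X -> is_crown e setT Y ->
  1 < #|X :&: Y| -> is_crown e setT (X :|: Y).
Proof.
rewrite !is_crownT => /forallP crX /forallP crY ltXY; apply/forallP => v.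
have /card_gt0P[z zXY] : 0 < #|(X :&: Y) :\ v|.
  by move: ltXY; rewrite (cardsD1 v (X :&: Y)); case: (_ \in _) => /=; lia.
exact: uniform_atU zXY (crX v) (crY v).
Qed.

Lemma star_setD1_crowns s : (forall v, is_star e (setT :\ v) s) ->
  exists2 X : T -> {set T},
    forall v, is_crown e (setT :\ v) (X v) & forall v, #|~: X v| <= s.+1.
Proof.
move=> star_del.
apply: (@fin_all_exists2 _ (fun=> {set T}) (fun v X => is_crown e (setT :\ v) X)
  (fun _ X => #|~: X| <= s.+1)) => v.
have /starP[X crX leX] := star_del v; exists X => //.
rewrite -setTD (cardsD1 v) setDDl setUC -setDDl.
by case: (v \in _); lia.
Qed.

Lemma exists_max_crown :
  exists2 M, is_crown e setT M & forall X, is_crown e setT X -> #|X| <= #|M|.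
Proof.
have crown0 : is_crown e setT set0.
  rewrite is_crownT; apply/forallP => v; rewrite /uniform_at set0D.
  by apply/orP; left; apply/forall_inP => x; rewrite inE.
by case: (arg_maxnP (fun X => #|X|) crown0) => M; exists M.
Qed.

Lemma sub_max_crown M X : is_crown e setT M ->
    (forall Y, is_crown e setT Y -> #|Y| <= #|M|) ->
  is_crown e setT X -> 1 < #|X :&: M| -> X \subset M.
Proof.
move=> crM maxM crX ltXM; apply/setUidPr/eqP.
by rewrite eq_sym eqEcard subsetUr maxM // crown_setU.
Qed.

End Crowns.

Lemma leq_card_disjoint_traces (T : finType) (A B : {set T})
    (F : T -> {set T}) :
    {in A, forall x, F x :&: B != set0} ->
    {in A &, forall x y, x != y -> F x :&: F y :&: B = set0} ->
  #|A| <= #|B|.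
Proof.
move=> meetB disjB.
have /fin_all_exists[f fP] x : exists b, x \in A -> b \in F x :&: B.
  have [/meetB/set0Pn[b bFB] | _] := boolP (x \in A); first by exists b.
  by exists x.
have f_inj : {in A &, injective f}.
  move=> x y xA yA fxy; apply/eqP/negPn/negP.
  move=> /(disjB x y xA yA)/setP/(_ (f x)).
  have := fP y yA; rewrite -fxy !inE => /andP[-> ->].
  by have := fP x xA; rewrite !inE => /andP[-> _].
rewrite -(card_in_imset f_inj).
apply/subset_leq_card/subsetP => _ /imsetP[x xA ->].
by have := fP x xA; rewrite inE => /andP[].
Qed.

Section VertexDeletedCrowns.
Variables (T : finType) (e : rel T) (s : nat) (X : T -> {set T}) (M : {set T}).
Hypotheses (crX : forall v, is_crown e (setT :\ v) (X v))
  (card_setCX : forall v, #|~: X v| <= s.+1)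
  (maxM : forall Y, is_crown e setT Y -> #|Y| <= #|M|).

Lemma card_setC_setI x y : #|~: (X x :&: X y)| <= 2 * s + 2.
Proof.
by rewrite setCI cardsU; have := card_setCX x; have := card_setCX y; lia.
Qed.

Lemma card_setC_max_crown : 1 < #|T| -> #|~: M| <= 2 * s + 2.
Proof.
case/card_gt1P=> x [y [_ _ xy]]; have := maxM (crown_setI xy (crX x) (crX y)).
have := card_setC_setI x y; have := cardsC (X x :&: X y).
by have := cardsC M; lia.
Qed.

Lemma setI_crowns_sub_max x y : is_crown e setT M -> 4 * s + 5 < #|T| ->
  x != y -> X x :&: X y \subset M.
Proof.
move=> crM n_big xy.
apply: sub_max_crown crM maxM (crown_setI xy (crX x) (crX y)) _.
have := card_setC_max_crown; have := card_setC_setI x y.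
by have := cardsC (X x :&: X y :&: M); rewrite setCI cardsU; lia.
Qed.

Lemma crown_meets_setC_max x : is_crown e setT M -> ~~ is_star e setT s ->
  x \in M -> X x :&: ~: M != set0.
Proof.
move=> crM not_star xM; rewrite -setDE setD_eq0 -setCS; apply/negP => sCMCX.
have := card_setD_crown_gt crM not_star; rewrite setTD => ltM.
have xCX : x \in ~: X x.
  have /andP[sXx _] := crX x; rewrite inE.
  by apply/negP => /(subsetP sXx); rewrite !inE eqxx.
have : ~: M \subset ~: X x :\ x by rewrite subsetD1 sCMCX inE xM.
move/subset_leq_card; have := cardsD1 x (~: X x); rewrite xCX.
by have := card_setCX x; lia.
Qed.

Lemma card_max_crown_le_setC : is_crown e setT M -> ~~ is_star e setT s ->
  4 * s + 5 < #|T| -> #|M| <= #|~: M|.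
Proof.
move=> crM not_star n_big.
apply: (@leq_card_disjoint_traces _ _ _ X) => [x xM | x y _ _ xy].
  exact: crown_meets_setC_max.
by apply/eqP; rewrite -setDE setD_eq0 setI_crowns_sub_max.
Qed.

End VertexDeletedCrowns.

Theorem lemma4p1 (T : finType) (e : rel T) (s : nat) :
  simple_graph e ->
  ~~ is_star e [set: T] s ->
  (forall v : T, is_star e ([set: T] :\ v) s) ->
  #|T| <= 4 * s + 5.
Proof.
move=> _ not_star star_del; rewrite leqNgt; apply/negP => n_big.
have [X crX card_setCX] := star_setD1_crowns star_del.
have [M crM maxM] := exists_max_crown e.
have := card_max_crown_le_setC crX card_setCX maxM crM not_star n_big.
have := card_setC_max_crown crX card_setCX maxM.
by have := cardsC M; lia.
Qed.
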